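(* Let $(X,d)$ be a complete cone metric space (in the setting described in the context). Let $L:E\to E$ be a positive linear operator, $\delta\in\mathcal{K}_+(E)$, and let $T:X\to B(X)$ be a $(\delta,L)$-weak contraction, i.e. $H(Tx,Ty)\preceq\delta\,d(x,y)+L\,d(y,Tx)$ for all $x,y\in X$, which satisfies condition (S). Suppose that the function $\varphi_T(x)=d(x,Tx)$ belongs to $\mathcal{LS}(X)$. Then there exists $x^*\in X$ with $x^*\in Tx^*$.
   Context: Let $E$ be a real topological vector space with zero element $\theta$, and $P\subseteq E$ a cone, i.e. a nonempty closed subset with $P\cap(-P)=\{\theta\}$ and $\lambda P+P\subseteq P$ for all $\lambda\ge 0$. Write $x\preceq y$ iff $y-x\in P$; $x\ll y$ iff $y-x\in\mathrm{int}(P)$. Standing assumptions: $E$ with this order is a Riesz space (every pair has an infimum) and is $\sigma$-order complete (every decreasing sequence bounded from below has an infimum). A cone metric space is a pair $(X,d)$ with $X$ nonempty and $d:X\times X\to E$ such that $d(x,y)=\theta$ iff $x=y$, and $d(x,y)\preceq d(x,z)+d(y,z)$ for all $x,y,z$. A sequence $(x_n)$ converges to $x$ iff for every $\epsilon\gg\theta$ there is $N$ with $d(x_n,x)\ll\epsilon$ for $n\ge N$; it is Cauchy iff for every $\epsilon\gg\theta$ there is $N$ with $d(x_m,x_n)\ll\epsilon$ for $m,n\ge N$; $X$ is complete iff every Cauchy sequence converges. A set $F\subseteq X$ is closed iff limits of convergent sequences in $F$ lie in $F$. $\varphi:X\to E$ is lower semicontinuous iff $\{x:\varphi(x)\preceq\alpha\}$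 is closed for every $\alpha\in E$, and bounded below iff some $b\in E$ satisfies $b\preceq\varphi(x)$ for all $x$; $\mathcal{LS}(X)$ is the set of lower semicontinuous, bounded below functions $X\to E$. $B(X)$ is the family of nonempty bounded subsets of $X$. For $x\in X$ and nonempty $A\subseteq X$, $d(x,A)=\inf_{y\in A}d(x,y)$, and for $A,B\in B(X)$, $H(A,B)=\sup\{\sup_{x\in A}d(x,B),\sup_{y\in B}d(y,A)\}$ (infima and suprema in the order $\preceq$, assumed to exist). A linear operator $L:E\to E$ is positive if $LP\subseteq P$. $\mathcal{K}_+(E)$ is the set of all positive, injective, continuous linear operators $\delta:E\to E$ for which there exists $0\le t<1$ with $\theta\preceq\delta x\preceq tx$ for all $x\in P$. A selector of $T$ is a function $f:X\to X$ with $f(x)\in Tx$ for all $x$. $T$ satisfies condition (S) if for every $\epsilon>0$ there is a selector $f_\epsilon$ of $T$ with $d(x,f_\epsilon(x))\preceq(1+\epsilon)d(x,Tx)$ for all $x\in X$. *)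

From HB Require Import structures.
From mathcomp Require Import all_boot all_order all_algebra.
From mathcomp Require Import all_classical all_reals all_analysis.
Set Implicit Arguments. Unset Strict Implicit. Unset Printing Implicit Defensive.
Import Order.TTheory GRing.Theory Num.Theory.
Local Open Scope classical_set_scope.
Local Open Scope ring_scope.

Section ConeDefs.
Context {R : realType} {E : topologicalLmodType R}.
Variable P : set E.

Definition is_cone : Prop :=
  [/\ P !=set0, closed P, P `&` [set - x | x in P] = [set 0] &
      forall (l : R) x y, 0 <= l -> P x -> P y -> P (l *: x + y)].

Definition cle (x y : E) : Prop := P (y - x).
Definition cll (x y : E) : Prop := (interior P) (y - x).

Definition is_lbound (S : set E) (a : E) := forall s, S s -> cle a s.
Definition is_ubound (S : set E) (a : E) := forall s, S s -> cle s a.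
Definition is_inf (S : set E) (a : E) :=
  is_lbound S a /\ forall b, is_lbound S b -> cle b a.
Definition is_sup (S : set E) (a : E) :=
  is_ubound S a /\ forall b, is_ubound S b -> cle a b.

Definition riesz_space := forall x y : E, exists a, is_inf [set x; y] a.
Definition sigma_order_complete :=
  forall u : nat -> E, (forall n, cle (u n.+1) (u n)) ->
    (exists b, is_lbound (range u) b) -> exists a, is_inf (range u) a.

(* chosen infimum / supremum (meaningful when they exist) *)
Definition cinf (S : set E) : E := xget 0 (is_inf S).
Definition csup (S : set E) : E := xget 0 (is_sup S).

Section ConeMetric.
Context {X : Type}.
Variable d : X -> X -> E.

Definition is_cone_metric :=
  (forall x y, d x y = 0 <-> x = y) /\
  (forall x y z, cle (d x y) (d x z + d y z)).

Definition cm_cvg (u : nat -> X) (x : X) :=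
  forall e, cll 0 e -> exists N, forall n, (N <= n)%N -> cll (d (u n) x) e.
Definition cm_cauchy (u : nat -> X) :=
  forall e, cll 0 e -> exists N, forall m n, (N <= m)%N -> (N <= n)%N ->
    cll (d (u m) (u n)) e.
Definition cm_complete :=
  forall u, cm_cauchy u -> exists x, cm_cvg u x.
Definition cm_closed (F : set X) :=
  forall u x, (forall n, F (u n)) -> cm_cvg u x -> F x.

Definition cm_lsc (phi : X -> E) :=
  forall alpha, cm_closed [set x | cle (phi x) alpha].
Definition bounded_below (phi : X -> E) :=
  exists b, forall x, cle b (phi x).
Definition LS (phi : X -> E) := cm_lsc phi /\ bounded_below phi.

Definition cm_bounded (A : set X) :=
  exists c, forall a b, A a -> A b -> cle (d a b) c.
Definition BX (A : set X) := A !=set0 /\ cm_bounded A.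

Definition dset (x : X) (A : set X) : E := cinf [set d x y | y in A].
Definition hausd (A B : set X) : E :=
  csup [set csup [set dset x B | x in A]; csup [set dset y A | y in B]].

(* standing assumption: the infima/suprema defining d(x,A), H(A,B) exist *)
Definition inf_sup_exist :=
  (forall x A, BX A -> exists a, is_inf [set d x y | y in A] a) /\
  (forall A B, BX A -> BX B -> exists a, is_sup [set dset x B | x in A] a).

End ConeMetric.

Definition positive_op (L : E -> E) := forall x, P x -> P (L x).

Definition Kplus (delta : E -> E) :=
  [/\ linear delta, positive_op delta, injective delta, continuous delta &
      exists t : R, 0 <= t < 1 /\
        forall x, P x -> cle 0 (delta x) /\ cle (delta x) (t *: x)].

End ConeDefs.

Definition condition_S {R : realType} {E : topologicalLmodType R} (P : set E)
  {X : Type} (d : X -> X -> E) (T : X -> set X) :=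
  forall eps : R, 0 < eps -> exists f : X -> X,
    (forall x, T x (f x)) /\
    (forall x, cle P (d x (f x)) ((1 + eps) *: dset P d x (T x))).

From HB Require Import structures.
From mathcomp Require Import all_boot all_order all_algebra.
From mathcomp Require Import all_classical all_reals all_analysis.
From mathcomp Require Import ring lra.
Import Order.TTheory GRing.Theory Num.Theory.
Import numFieldTopology.Exports numFieldNormedType.Exports.
Set Implicit Arguments. Unset Strict Implicit.
Local Open Scope classical_set_scope.
Local Open Scope ring_scope.

(* Iterate a selector f of T given by condition (S) with 1 + eps close enough to 1
   that k := (1 + eps) t < 1.  Since d(f x, T(f x)) <= H(T x, T (f x)) and f x lies
   in T x, the weak contraction gives d(f x, T(f x)) <= delta (d(x, f x)) <= k d(x, T x),
   so along the orbit x_n both d(x_n, T x_n) and d(x_n, x_(n+1)) are dominated by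
   geometric sequences k^n v.  The orbit is Cauchy, hence converges to some x';
   lower semicontinuity gives d(x', T x') <= k^m v for every m, and closedness of the
   cone forces d(x', T x') = 0.  Condition (S) then yields x' = f x' in T x'. *)

Lemma cvg_addZl0 (R : realType) (E : topologicalLmodType R) (c : nat -> R) (v w : E) :
  c @ \oo --> (0 : R) -> (fun n => w + c n *: v) @ \oo --> w.
Proof.
move=> c0; have cv : (fun n => c n *: v) @ \oo --> (0 : R) *: v.
  exact: (@continuous2_cvg _ R^o E E _ _ _ _ ( *:%R) _ _
           (@scale_continuous R E (0, v)) c0 (cvg_cst v)).
rewrite scale0r in cv; rewrite -[X in _ --> X]addr0.
exact: (@continuous2_cvg _ E E E _ _ _ _ +%R _ _ (@add_continuous E (w, 0)) (cvg_cst w) cv).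
Qed.

Section Cone.
Context {R : realType} {E : topologicalLmodType R}.
Variable P : set E.
Hypothesis hP : is_cone P.

Lemma cone0 : P 0.
Proof. by case: hP => _ _ P_N _; have : [set 0] (0 : E) by []; rewrite -P_N => -[]. Qed.

Lemma cone_anti x : P x -> P (- x) -> x = 0.
Proof.
case: hP => _ _ P_N _ Px PNx.
have : (P `&` [set - y | y in P]) x by split => //; exists (- x); rewrite ?opprK.
by rewrite P_N.
Qed.

Lemma coneD x y : P x -> P y -> P (x + y).
Proof. by case: hP => _ _ _ PZD Px Py; have := PZD 1 x y ler01 Px Py; rewrite scale1r. Qed.

Lemma coneZ l x : 0 <= l -> P x -> P (l *: x).
Proof. by case: hP => _ _ _ PZD l0 Px; have := PZD l x 0 l0 Px cone0; rewrite addr0. Qed.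

Lemma cle_refl x : cle P x x.
Proof. by rewrite /cle subrr; exact: cone0. Qed.

Lemma cle_trans y x z : cle P x y -> cle P y z -> cle P x z.
Proof. by rewrite /cle => xy yz; have := coneD yz xy; rewrite addrA subrK. Qed.

Lemma cle_anti x y : cle P x y -> cle P y x -> x = y.
Proof.
rewrite /cle => xy yx; apply/eqP; rewrite eq_sym -subr_eq0.
by apply/eqP/cone_anti; rewrite ?opprB.
Qed.

Lemma cle0P x : cle P 0 x <-> P x.
Proof. by rewrite /cle subr0. Qed.

Lemma cleD a b c e : cle P a b -> cle P c e -> cle P (a + c) (b + e).
Proof. by rewrite /cle => ab ce; have := coneD ab ce; rewrite opprD addrACA. Qed.

Lemma cleZ2l l a b : 0 <= l -> cle P a b -> cle P (l *: a) (l *: b).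
Proof. by rewrite /cle -scalerBr; exact: coneZ. Qed.

Lemma cleZ2r l1 l2 v : l1 <= l2 -> P v -> cle P (l1 *: v) (l2 *: v).
Proof. by rewrite /cle -scalerBl -subr_ge0; exact: coneZ. Qed.

Lemma interior_coneD a p : interior P a -> P p -> interior P (a + p).
Proof.
move=> Pa Pp; have := nbhsB_subproof (@add_continuous E) p Pa.
by rewrite /interior addrC; apply: filterS => _ [y Py <-]; exact: coneD.
Qed.

Lemma interior_cone_eventually (c : nat -> R) e v : interior P e ->
  c @ \oo --> (0 : R) -> exists N, forall n, (N <= n)%N -> interior P (e - c n *: v).
Proof.
move=> Pe c0.
have Nc0 : (fun n => - c n) @ \oo --> (0 : R) by rewrite -oppr0; exact: cvgN.
have e_nbhs : nbhs e (interior P) by move: (open_interior P); rewrite openE; exact.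
have [N _ N_int] := cvg_addZl0 v (w := e) Nc0 e_nbhs.
by exists N => n Nn; have := N_int n Nn; rewrite /= scaleNr.
Qed.

Lemma cle_cvg0_eq0 (c : nat -> R) x v : c @ \oo --> (0 : R) ->
  (forall n, cle P x (c n *: v)) -> P x -> x = 0.
Proof.
move=> c0 x_le Px; apply: cone_anti => //.
have Pclosed : closed P by case: hP.
apply: (closed_cvg _ Pclosed _ _ (cvg_addZl0 v (w := - x) c0)).
by apply: nearW => n /=; rewrite addrC; exact: x_le.
Qed.

Lemma riesz_sup_pair :
  riesz_space P -> forall a b : E, exists s, is_sup P [set a; b] s.
Proof.
move=> riesz a b; have [m [m_lb m_glb]] := riesz (- a) (- b).
have cleN x y : cle P (- x) (- y) <-> cle P y x by rewrite /cle opprK addrC.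
exists (- m); split.
  move=> s [->|->]; apply/cleN; rewrite opprK; apply: m_lb; by [left|right].
move=> u u_ub; apply/cleN; rewrite opprK.
apply: m_glb => s [->|->]; apply/cleN; apply: u_ub; by [left|right].
Qed.

Lemma positive_op_cle (f : E -> E) a b : linear f -> positive_op P f ->
  cle P a b -> cle P (f a) (f b).
Proof. by move=> f_lin f_pos; rewrite /cle -(zmod_morphism_linear f_lin); exact: f_pos. Qed.

Section ConeMetric.
Variables (X : Type) (d : X -> X -> E).
Hypothesis hd : is_cone_metric P d.

Lemma cm_d0 x : d x x = 0.
Proof. by apply/hd.1. Qed.

Lemma cm_dC x y : d x y = d y x.
Proof.
by apply: cle_anti; [have := hd.2 x y x | have := hd.2 y x y]; rewrite cm_d0 add0r.
Qed.

Lemma cm_dge0 x y : P (d x y).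
Proof.
have := hd.2 x x y; rewrite cm_d0 => /cle0P P2d.
have -> : d x y = (2^-1 : R) *: (d x y + d x y).
  by rewrite scalerDr -scalerDl -div1r -splitr scale1r.
by apply: coneZ; rewrite ?invr_ge0.
Qed.

Lemma cm_d_telescope (x : nat -> X) (B : nat -> R) v :
  (forall n, cle P (d (x n) (x n.+1)) ((B n - B n.+1) *: v)) ->
  forall n j, cle P (d (x n) (x (n + j)%N)) ((B n - B (n + j)%N) *: v).
Proof.
move=> d_step n; elim=> [|j IHj].
  by rewrite addn0 subrr scale0r cm_d0; exact: cle_refl.
rewrite addnS; apply: (cle_trans (hd.2 _ _ (x (n + j)%N))).
rewrite (cm_dC (x (n + j).+1)) -[B n](subrK (B (n + j)%N)) -addrA scalerDl.
exact: cleD.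
Qed.

Lemma cm_cauchy_telescope (x : nat -> X) (B : nat -> R) v : P v ->
  (forall n, 0 <= B n) -> {homo B : m n / (m <= n)%N >-> n <= m} ->
  B @ \oo --> (0 : R) ->
  (forall n, cle P (d (x n) (x n.+1)) ((B n - B n.+1) *: v)) -> cm_cauchy P d x.
Proof.
move=> Pv B_ge0 B_noninc B0 d_step.
have d_le N m n : (N <= m)%N -> (N <= n)%N -> cle P (d (x m) (x n)) (B N *: v).
  wlog mn : m n / (m <= n)%N.
    move=> wlog_mn Nm Nn; have [/wlog_mn|/ltnW/wlog_mn] := leqP m n; first exact.
    by rewrite cm_dC; exact.
  move=> Nm _; rewrite -(subnKC mn); apply: (cle_trans (cm_d_telescope d_step _ _)).
  by apply: cleZ2r => //; have := B_noninc _ _ Nm; have := B_ge0 (m + (n - m))%N; lra.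
move=> e; rewrite /cll subr0 => Pe.
have [N N_int] := interior_cone_eventually v Pe B0.
exists N => m n Nm Nn; rewrite /cll -[e](subrK (B N *: v)) -addrA.
exact: interior_coneD (N_int N (leqnn N)) (d_le N m n Nm Nn).
Qed.

Lemma cm_cauchy_geometric (x : nat -> X) (c k : R) v :
  P v -> 0 <= c -> 0 <= k < 1 ->
  (forall n, cle P (d (x n) (x n.+1)) ((c * k ^+ n) *: v)) -> cm_cauchy P d x.
Proof.
move=> Pv c0 /andP[k0 k1] d_step; pose B n := c / (1 - k) * k ^+ n.
have Bc_ge0 : 0 <= c / (1 - k) by rewrite divr_ge0 // subr_ge0 ltW.
apply: (@cm_cauchy_telescope _ B v) => //.
- by move=> n; rewrite mulr_ge0 // exprn_ge0.
- by move=> m n mn; rewrite ler_wpM2l // ler_wiXn2l // ltW.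
- by have := cvg_geometric (c / (1 - k)) (z := k); rewrite ger0_norm //; exact.
- move=> n; have k1_neq0 : 1 - k != 0 by rewrite subr_eq0 eq_sym lt_eqF.
  by have -> : B n - B n.+1 = c * k ^+ n by rewrite /B exprS; field.
Qed.

Lemma cm_cvg_shift (x : nat -> X) l m :
  cm_cvg P d x l -> cm_cvg P d (fun n => x (m + n)%N) l.
Proof.
move=> xl e e0; have [N N_ll] := xl e e0.
by exists N => n Nn; apply: N_ll; rewrite (leq_trans Nn) ?leq_addl.
Qed.

Lemma condition_S_fixed (T : X -> set X) x :
  condition_S P d T -> dset P d x (T x) = 0 -> T x x.
Proof.
move=> hS dx0; have [f [fT f_le]] := hS 1 ltr01.
have := f_le x; rewrite dx0 scaler0 /cle sub0r => PNd.
have x_fx : x = f x by apply/hd.1/cone_anti => //; exact: cm_dge0.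
by rewrite {2}x_fx.
Qed.

Section HausdorffDistance.
Hypothesis hex : inf_sup_exist P d.
Hypothesis riesz : riesz_space P.

Lemma dset_inf y A : BX P d A -> is_inf P [set d y z | z in A] (dset P d y A).
Proof. by move=> BA; apply: xgetPex; exact: hex.1. Qed.

Lemma dset_ge0 y A : BX P d A -> P (dset P d y A).
Proof.
move=> BA; apply/cle0P; apply: (dset_inf y BA).2 => _ [z _ <-].
by apply/cle0P; exact: cm_dge0.
Qed.

Lemma dset_mem y A : BX P d A -> A y -> dset P d y A = 0.
Proof.
move=> BA Ay; apply: cle_anti; last by apply/cle0P; exact: dset_ge0.
by rewrite -(cm_d0 y); apply: (dset_inf y BA).1; exists y.
Qed.

Lemma dset_le_hausd A B z : BX P d A -> BX P d B -> A z ->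
  cle P (dset P d z B) (hausd P d A B).
Proof.
move=> BA BB Az; set sA := csup P [set dset P d x B | x in A].
have sA_sup : is_sup P [set dset P d x B | x in A] sA.
  by apply: xgetPex; exact: hex.2.
have H_sup : is_sup P [set sA; csup P [set dset P d y A | y in B]] (hausd P d A B).
  by apply: xgetPex; exact: riesz_sup_pair.
by apply: (cle_trans (sA_sup.1 _ _)); [exists z | apply: H_sup.1; left].
Qed.

Section WeakContraction.
Variables (L delta : E -> E) (T : X -> set X) (t : R).
Hypothesis hL : linear L.
Hypothesis delta_lin : linear delta.
Hypothesis delta_pos : positive_op P delta.
Hypothesis t_ge0 : 0 <= t.
Hypothesis delta_le : forall z, P z -> cle P (delta z) (t *: z).
Hypothesis hT : forall x, BX P d (T x).
Hypothesis hcontr : forall x y,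
  cle P (hausd P d (T x) (T y)) (delta (d x y) + L (dset P d y (T x))).

Local Notation phi x := (dset P d x (T x)).

Lemma dset_image_le x y : T x y -> cle P (phi y) (delta (d x y)).
Proof.
move=> Txy; apply: (cle_trans (dset_le_hausd (hT x) (hT y) Txy)).
have L0 : L 0 = 0 by have := zmod_morphism_linear hL 0 0; rewrite !subrr.
by have := hcontr x y; rewrite (dset_mem (hT x) Txy) L0 addr0.
Qed.

Variables (f : X -> X) (c : R).
Hypothesis f_sel : forall x, T x (f x).
Hypothesis c_ge0 : 0 <= c.
Hypothesis f_le : forall x, cle P (d x (f x)) (c *: phi x).

Lemma dset_selector_le x : cle P (phi (f x)) ((c * t) *: phi x).
Proof.
apply: (cle_trans (dset_image_le (f_sel x))).
apply: (cle_trans (positive_op_cle delta_lin delta_pos (f_le x))).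
rewrite (scalable_linear delta_lin) -scalerA; apply: cleZ2l => //.
exact/delta_le/dset_ge0.
Qed.

Lemma selector_orbit_le x0 n :
  cle P (phi (iter n f x0)) ((c * t) ^+ n *: phi x0) /\
  cle P (d (iter n f x0) (iter n.+1 f x0)) ((c * (c * t) ^+ n) *: phi x0).
Proof.
have phi_le : cle P (phi (iter n f x0)) ((c * t) ^+ n *: phi x0).
  elim: n => [|n IHn]; first by rewrite expr0 scale1r; exact: cle_refl.
  apply: (cle_trans (dset_selector_le _)).
  by rewrite exprS -[(_ * _ ^+ _) *: _]scalerA; apply: cleZ2l => //; rewrite mulr_ge0.
split=> //; apply: (cle_trans (f_le _)).
by rewrite -scalerA; exact: cleZ2l c_ge0 phi_le.
Qed.

End WeakContraction.
End HausdorffDistance.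
End ConeMetric.
End Cone.

Unset Implicit Arguments. Set Strict Implicit.

Theorem theorem4 (R : realType) (E : topologicalLmodType R) (P : set E)
  (hP : is_cone P) (hRiesz : riesz_space P) (hsig : sigma_order_complete P)
  (X : Type) (hX : inhabited X) (d : X -> X -> E) (hd : is_cone_metric P d)
  (hcomp : cm_complete P d) (hex : inf_sup_exist P d)
  (L delta : E -> E) (hL : linear L) (hLpos : positive_op P L)
  (hdelta : Kplus P delta)
  (T : X -> set X) (hT : forall x, BX P d (T x))
  (hcontr : forall x y, cle P (hausd P d (T x) (T y))
                              (delta (d x y) + L (dset P d y (T x))))
  (hS : condition_S P d T)
  (hphi : LS P d (fun x => dset P d x (T x))) :
  exists xs : X, T xs xs.
Proof.
have [delta_lin delta_pos _ _ [t [/andP[t_ge0 t_lt1] delta_t]]] := hdelta.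
have delta_le z : P z -> cle P (delta z) (t *: z) by move=> /delta_t[].
pose eps := (1 - t) / 2; pose c := 1 + eps; pose k := c * t.
have eps_gt0 : 0 < eps by rewrite divr_gt0 // subr_gt0.
have c_ge0 : 0 <= c by rewrite addr_ge0 // ltW.
have k_ge0 : 0 <= k by rewrite mulr_ge0.
have k_lt1 : k < 1 by rewrite /k /c /eps; nra.
have [f [f_sel f_le]] := hS eps eps_gt0.
have [x0] := hX; pose x n := iter n f x0; pose v := dset P d x0 (T x0).
have Pv : P v := dset_ge0 hP hd hex x0 (hT x0).
have orbit_le := selector_orbit_le hP hd hex hRiesz hL delta_lin delta_pos t_ge0
  delta_le hT hcontr f_sel c_ge0 f_le x0.
have x_cauchy : cm_cauchy P d x.
  apply: (cm_cauchy_geometric hP hd Pv c_ge0 (k := k)) => [|n]; first by rewrite k_ge0.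
  exact: (orbit_le n).2.
have [xs x_xs] := hcomp x x_cauchy.
have phi_xs_le m : cle P (dset P d xs (T xs)) (k ^+ m *: v).
  apply: (hphi.1 _ _ _ _ (cm_cvg_shift m x_xs)) => n.
  apply: (cle_trans hP (orbit_le (m + n)%N).1).
  by apply: cleZ2r => //; rewrite ler_wiXn2l ?leq_addr // ltW.
have phi_xs0 : dset P d xs (T xs) = 0.
  apply: (cle_cvg0_eq0 hP _ phi_xs_le); last exact: dset_ge0.
  by apply: cvg_expr; rewrite ger0_norm.
by exists xs; exact: (condition_S_fixed hP hd hS phi_xs0).
Qed.
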